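(* For every context $\Gamma$ and formula $A$: if the sequent $\Gamma\vdash A$ is derivable in the sequent calculus, then it has a focused derivation.
   Context: Formulas are built from atoms ($p,q,\dots$) by a binary product: every formula is an atom or $A\bullet B$. A context is a finite (possibly empty) list of formulas; commas denote concatenation. The sequent calculus has exactly four rules (no weakening, contraction or exchange): ($\bullet L$) from $A,B,\Delta\vdash C$ infer $A\bullet B,\Delta\vdash C$ (the product must be the leftmost formula); ($\bullet R$) from $\Gamma\vdash A$ and $\Delta\vdash B$ infer $\Gamma,\Delta\vdash A\bullet B$; ($id$) $A\vdash A$; ($cut$) from $\Theta\vdash A$ and $\Gamma,A,\Delta\vdash B$ infer $\Gamma,\Theta,\Delta\vdash B$. A sequent is derivable if it is the conclusion of a finite derivation tree of these rules with no undischarged premises. A context is irreducible if its leftmost formula is not a product (i.e. it is empty or begins with an atom), and reducible otherwise. A focused derivation is a finite derivation tree (with no undischarged premises) using only: the rule ($\bullet L$); the restricted rule ($\bullet R^{foc}$): from $\Gamma\vdash A$ and $\Delta\vdash B$ infer $\Gamma,\Delta\vdash A\bullet B$, where $\Gamma$ is irreducible; and the restricted rule ($id^{atm}$): $p\vdash p$ for atoms $p$ (no cut). *)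

(* Product-only fragment of the non-commutative Lambek calculus. *)
From Stdlib Require Import List.
Import ListNotations.

Inductive formula : Type :=
| Atom : nat -> formula
| Prod : formula -> formula -> formula.

Definition context := list formula.

Inductive derivable : context -> formula -> Prop :=
| d_prodL : forall A B Delta C,
    derivable (A :: B :: Delta) C ->
    derivable (Prod A B :: Delta) C
| d_prodR : forall Gamma Delta A B,
    derivable Gamma A -> derivable Delta B ->
    derivable (Gamma ++ Delta) (Prod A B)
| d_id : forall A, derivable [A] A
| d_cut : forall Theta Gamma Delta A B,
    derivable Theta A ->
    derivable (Gamma ++ A :: Delta) B ->
    derivable (Gamma ++ Theta ++ Delta) B.

Definition irreducible (Gamma : context) : Prop :=
  match Gamma with
  | [] => True
  | Atom _ :: _ => True
  | Prod _ _ :: _ => False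
  end.

Inductive focused : context -> formula -> Prop :=
| f_prodL : forall A B Delta C,
    focused (A :: B :: Delta) C ->
    focused (Prod A B :: Delta) C
| f_prodR : forall Gamma Delta A B,
    irreducible Gamma ->
    focused Gamma A -> focused Delta B ->
    focused (Gamma ++ Delta) (Prod A B)
| f_id_atm : forall p, focused [Atom p] (Atom p).

(* The unrestricted rule (•R) is admissible in the focused system: the (•L)
   steps of its left premise can be permuted below it, after which its left
   context starts with an atom.  Identities are obtained by eta-expansion
   down to atoms.  Cut is admissible by induction on the cut formula and then
   on the derivation of the right premise; when the cut product X • Y is
   decomposed by (•L) in the right premise, the left premise is traversed down
   to its (•R^foc) step, and the cut is replaced by cuts on X and on Y. *)

From Stdlib Require Import List.
Import ListNotations.

Lemma focused_nonempty (Gamma : context) (A : formula) :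
  focused Gamma A -> Gamma <> [].
Proof.
  intros H; induction H; try discriminate.
  destruct Gamma; [contradiction | discriminate].
Qed.

Lemma irreducible_app (Gamma Delta : context) :
  Gamma <> [] -> irreducible Gamma -> irreducible (Gamma ++ Delta).
Proof.
  destruct Gamma as [| [p | X Y] Gamma]; simpl; tauto.
Qed.

Lemma focused_prodR (Gamma Delta : context) (A B : formula) :
  focused Gamma A -> focused Delta B -> focused (Gamma ++ Delta) (Prod A B).
Proof.
  intros HA HB; induction HA.
  - apply f_prodL; assumption.
  - apply f_prodR; [| apply f_prodR |]; auto.
    apply irreducible_app; [exact (focused_nonempty _ _ HA1) | assumption].
  - apply f_prodR; simpl; auto using f_id_atm.
Qed.

Lemma focused_id (A : formula) : focused [A] A.
Proof.
  induction A as [p | A IHA B IHB].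
  - apply f_id_atm.
  - apply f_prodL, (focused_prodR [A] [B]); assumption.
Qed.

Lemma focused_atom_inv (Gamma : context) (p : nat) :
  focused Gamma (Atom p) -> Gamma = [Atom p].
Proof.
  intros H; remember (Atom p) as P eqn:HP.
  induction H; try discriminate.
  - discriminate (IHfocused HP).
  - congruence.
Qed.

Definition cut_admissible (A : formula) : Prop :=
  forall Theta Gamma Delta B,
    focused Theta A -> focused (Gamma ++ A :: Delta) B ->
    focused (Gamma ++ Theta ++ Delta) B.

Lemma cut_admissible_atom (p : nat) : cut_admissible (Atom p).
Proof.
  intros Theta Gamma Delta B HT H.
  rewrite (focused_atom_inv _ _ HT); exact H.
Qed.

Section CutProduct.

Variables X Y : formula.
Hypothesis cut_X : cut_admissible X.
Hypothesis cut_Y : cut_admissible Y.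

Lemma cut_prod_principal (Theta Delta : context) (C : formula) :
  focused Theta (Prod X Y) -> focused (X :: Y :: Delta) C ->
  focused (Theta ++ Delta) C.
Proof.
  intros HT HC; remember (Prod X Y) as P eqn:HP.
  induction HT as [A B Theta' P' _ IH | Theta1 Theta2 A B _ HX _ HY _ |];
    try discriminate.
  - apply f_prodL, IH; assumption.
  - injection HP as -> ->.
    rewrite <- app_assoc.
    exact (cut_X Theta1 [] _ C HX (cut_Y Theta2 [X] Delta C HY HC)).
Qed.

Lemma cut_admissible_prod : cut_admissible (Prod X Y).
Proof.
  intros Theta Gamma Delta C HT H.
  remember (Gamma ++ Prod X Y :: Delta) as L eqn:HL.
  revert Gamma Delta HL.
  induction H as [A B Delta0 C' HC IH | Gamma0 Delta0 A B Hirr H1 IH1 H2 IH2 | p];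
    intros Gamma Delta HL.
  - destruct Gamma as [| F Gamma]; simpl in HL; injection HL.
    + intros -> -> ->. exact (cut_prod_principal _ _ _ HT HC).
    + intros -> <-. apply f_prodL, (IH (A :: B :: Gamma)); reflexivity.
  - apply app_eq_app in HL as [l [[-> E] | [-> E]]].
    + destruct l as [| F l]; simpl in E.
      * subst Delta0; rewrite app_nil_r in Hirr, H1.
        apply f_prodR; [assumption | assumption | apply (IH2 [])]; reflexivity.
      * injection E as <- ->.
        replace (Gamma ++ Theta ++ l ++ Delta0)
          with ((Gamma ++ Theta ++ l) ++ Delta0) by now rewrite <- !app_assoc.
        (* An irreducible context cannot start with the cut formula. *)
        destruct Gamma as [| G Gamma]; [contradiction |].
        apply f_prodR; [| apply IH1; reflexivity | assumption].
        apply irreducible_app; [discriminate | assumption].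
    + rewrite <- app_assoc.
      apply f_prodR; [| | apply IH2]; auto.
  - destruct Gamma as [| F [| F' Gamma]]; discriminate.
Qed.

End CutProduct.

Lemma focused_cut (A : formula) : cut_admissible A.
Proof.
  induction A as [p | X IHX Y IHY].
  - apply cut_admissible_atom.
  - apply cut_admissible_prod; assumption.
Qed.

Theorem theorem1p12 (Gamma : context) (A : formula) :
  derivable Gamma A -> focused Gamma A.
Proof.
  intros H; induction H.
  - apply f_prodL; assumption.
  - apply focused_prodR; assumption.
  - apply focused_id.
  - apply (focused_cut A); assumption.
Qed.
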